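(* Let $G$ be the group given by the presentation $P=\langle x_1,\ldots,x_n\mid r_1^{a_1},\ldots,r_m^{a_m}\rangle$, where each $r_i$ is an element of the free group $F_n$ on $x_1,\ldots,x_n$ that is not a proper power, and let $\varphi:F_n\to G$ be the canonical map. Suppose there exist a residually finite group $N$ and a homomorphism $\psi:G\to N$ such that the order of $\psi(\varphi(r_i))$ in $N$ is $a_i$ for all $1\le i\le m$. Then \[rdef(P)=n-\sum_{i=1}^m\frac1{a_i}.\]
   Context: For the presentation $P$, let $R_G$ be the finite residual of $G$ (intersection of all finite index subgroups) and $k_i$ the order of $\varphi(r_i)R_G$ in $G/R_G$; the residual deficiency of $P$ is $rdef(P)=n-\sum_{i=1}^m 1/k_i$. *)

From HB Require Import structures.
From mathcomp Require Import all_boot all_order all_algebra.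
From Stdlib Require Import ClassicalEpsilon.
Set Implicit Arguments. Unset Strict Implicit. Unset Printing Implicit Defensive.
Import GRing.Theory Num.Theory.

(* Abstract (possibly infinite) groups. *)
Record group := Group {
  carrier :> Type;
  gmul : carrier -> carrier -> carrier;
  ginv : carrier -> carrier;
  gone : carrier;
  gmulA : forall x y z, gmul x (gmul y z) = gmul (gmul x y) z;
  gmul1g : forall x, gmul gone x = x;
  gmulg1 : forall x, gmul x gone = x;
  gmulVg : forall x, gmul (ginv x) x = gone;
  gmulgV : forall x, gmul x (ginv x) = gone }.

Arguments gmul {g}. Arguments ginv {g}. Arguments gone {g}.

Fixpoint gpow (G : group) (g : G) (k : nat) : G :=
  match k with O => gone | S k' => gmul g (gpow g k') end.

Definition is_hom (G H : group) (f : G -> H) : Prop :=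
  forall x y, f (gmul x y) = gmul (f x) (f y).

Definition subgroup (G : group) (S : G -> Prop) : Prop :=
  S gone /\ (forall x y, S x -> S y -> S (gmul x y)) /\ (forall x, S x -> S (ginv x)).

Definition normal_subgroup (G : group) (S : G -> Prop) : Prop :=
  subgroup S /\ forall g x, S x -> S (gmul (ginv g) (gmul x g)).

Definition finite_index (G : group) (S : G -> Prop) : Prop :=
  exists s : seq G, forall g : G, exists c, List.In c s /\ S (gmul (ginv c) g).

Definition normal_closure (G : group) (A : G -> Prop) : G -> Prop :=
  fun w => forall K : G -> Prop, normal_subgroup K -> (forall u, A u -> K u) -> K w.

Definition finite_residual (G : group) : G -> Prop :=
  fun g => forall H : G -> Prop, subgroup H -> finite_index H -> H g.

Definition residually_finite (G : group) : Prop :=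
  forall g : G, g <> gone ->
    exists H : G -> Prop, normal_subgroup H /\ finite_index H /\ ~ H g.

Definition free_on (F : group) (n : nat) (x : 'I_n -> F) : Prop :=
  forall (H : group) (f : 'I_n -> H),
    (exists h : F -> H, is_hom h /\ forall i, h (x i) = f i) /\
    (forall h1 h2 : F -> H, is_hom h1 -> is_hom h2 ->
       (forall i, h1 (x i) = f i) -> (forall i, h2 (x i) = f i) ->
       forall w, h1 w = h2 w).

Definition proper_power (G : group) (r : G) : Prop :=
  exists (s : G) (k : nat), (2 <= k)%N /\ r = gpow s k.

Definition has_order (G : group) (g : G) (k : nat) : Prop :=
  (0 < k)%N /\ gpow g k = gone /\ forall j, (0 < j < k)%N -> gpow g j <> gone.

Definition presents (F G : group) (m : nat) (r : 'I_m -> F) (a : 'I_m -> nat)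
    (phi : F -> G) : Prop :=
  is_hom phi /\ (forall g : G, exists w, phi w = g) /\
  (forall w, phi w = gone <->
     normal_closure (fun u => exists i, u = gpow (r i) (a i)) w).

(* order of the coset gR in G/R (R normal): least k>0 with g^k in R *)
Definition coset_order_is (G : group) (R : G -> Prop) (g : G) (k : nat) : Prop :=
  (0 < k)%N /\ R (gpow g k) /\ forall j, (0 < j < k)%N -> ~ R (gpow g j).

(* the order as a nat; 0 encodes infinite order (then 1/0 = 0 in rat) *)
Definition coset_order (G : group) (R : G -> Prop) (g : G) : nat :=
  epsilon (inhabits 0%N) (fun k => coset_order_is R g k).

Local Open Scope ring_scope.

Definition rdef (F G : group) (n m : nat) (r : 'I_m -> F) (phi : F -> G) : rat :=
  n%:R - \sum_(i < m) ((coset_order (@finite_residual G) (phi (r i)))%:R)^-1.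

(* The relator r_i^{a_i} dies in G, so the order of phi(r_i) R_G divides a_i.
   Conversely, a homomorphism into a group maps finite-index subgroups back to
   finite-index subgroups, hence maps the finite residual of G into that of N;
   the latter is trivial when N is residually finite.  So phi(r_i)^j lies in R_G
   only if psi(phi(r_i))^j = 1, i.e. only if a_i divides j: the coset order is
   exactly a_i. *)
From mathcomp Require Import all_boot all_order all_algebra.
From Stdlib Require Import ClassicalEpsilon.
Import GRing.Theory Num.Theory.
Local Open Scope ring_scope.

Section GroupLaws.
Variable G : group.

Lemma ginv_uniq (u v : G) : gmul u v = gone -> u = ginv v.
Proof. by move=> uv1; rewrite -(gmulg1 u) -(gmulgV v) gmulA uv1 gmul1g. Qed.

Lemma ginvK (c : G) : ginv (ginv c) = c.
Proof. by symmetry; apply: ginv_uniq; rewrite gmulgV. Qed.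

Lemma ginvM (x y : G) : ginv (gmul x y) = gmul (ginv y) (ginv x).
Proof.
symmetry; apply: ginv_uniq.
by rewrite -gmulA (gmulA (ginv x)) gmulVg gmul1g gmulVg.
Qed.

Lemma finite_residual1 : finite_residual (@gone G).
Proof. by move=> H [H1 _] _. Qed.

End GroupLaws.

Section Homomorphisms.
Variables (G H : group) (f : G -> H).
Hypothesis f_hom : is_hom f.

Lemma hom1 : f gone = gone.
Proof.
have ff1 : gmul (f gone) (f gone) = f gone by rewrite -f_hom gmul1g.
by rewrite -[LHS]gmul1g -(gmulVg (f gone)) -gmulA ff1.
Qed.

Lemma homV x : f (ginv x) = ginv (f x).
Proof. by apply: ginv_uniq; rewrite -f_hom gmulVg hom1. Qed.

Lemma homX x k : f (gpow x k) = gpow (f x) k.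
Proof. by elim: k => [|k IHk] /=; [exact: hom1 | rewrite f_hom IHk]. Qed.

Lemma subgroup_preim (S : H -> Prop) : subgroup S -> subgroup (fun g => S (f g)).
Proof.
move=> [S1 [SM SV]]; split; first by rewrite hom1.
split; first by move=> u v Su Sv; rewrite f_hom; apply: SM.
by move=> u Su; rewrite homV; apply: SV.
Qed.

(* Each coset c S meeting the image of f gets a preimage representative. *)
Lemma finite_index_preim (S : H -> Prop) :
  subgroup S -> finite_index S -> finite_index (fun g => S (f g)).
Proof.
move=> [_ [SM SV]] [s cover].
pose rep c := epsilon (inhabits gone) (fun g : G => S (gmul (ginv c) (f g))).
exists (map rep s) => g.
have [c [cs Sc]] := cover (f g).
have Srep : S (gmul (ginv c) (f (rep c))) :=
  epsilon_spec (inhabits gone) (fun g0 : G => S (gmul (ginv c) (f g0)))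
               (ex_intro _ g Sc).
exists (rep c); split; first exact: List.in_map.
rewrite f_hom homV.
have := SM _ _ (SV _ Srep) Sc.
by rewrite ginvM ginvK -gmulA (gmulA c) gmulgV gmul1g.
Qed.

Lemma hom_finite_residual g : finite_residual g -> finite_residual (f g).
Proof.
move=> Rg S Ssub Sfin.
by apply: (Rg (fun g => S (f g))); [apply: subgroup_preim | apply: finite_index_preim].
Qed.

End Homomorphisms.

Lemma residually_finite_residual1 (N : group) (y : N) :
  residually_finite N -> finite_residual y -> y = gone.
Proof.
move=> Nrf Ry; apply: NNPP => y_ne1.
have [S [[Ssub _] [Sfin notSy]]] := Nrf _ y_ne1.
exact: notSy (Ry _ Ssub Sfin).
Qed.

Lemma presents_relator1 {F G : group} {m} {r : 'I_m -> F} {a} {phi : F -> G} i :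
  presents r a phi -> phi (gpow (r i) (a i)) = gone.
Proof. by move=> [_ [_ ker_phi]]; apply/ker_phi => K _ relK; apply: relK; exists i. Qed.

Lemma coset_order_uniq (G : group) (R : G -> Prop) g k1 k2 :
  coset_order_is R g k1 -> coset_order_is R g k2 -> k1 = k2.
Proof.
move=> [k1_gt0 [Rk1 min1]] [k2_gt0 [Rk2 min2]].
case: (ltngtP k1 k2) => // lt_k.
- by case: (min2 k1) => //; rewrite k1_gt0 lt_k.
- by case: (min1 k2) => //; rewrite k2_gt0 lt_k.
Qed.

Lemma coset_orderE (G : group) (R : G -> Prop) g k :
  coset_order_is R g k -> coset_order R g = k.
Proof.
move=> gk.
exact: coset_order_uniq (epsilon_spec (inhabits 0%N) _ (ex_intro _ k gk)) gk.
Qed.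

Lemma coset_order_finite_residual (G N : group) (psi : G -> N) g k :
  is_hom psi -> residually_finite N -> has_order (psi g) k ->
  finite_residual (gpow g k) -> coset_order_is (@finite_residual G) g k.
Proof.
move=> psi_hom Nrf [k_gt0 [_ min_k]] Rgk; do 2!split => //.
move=> j j_lt Rgj; apply: (min_k j j_lt).
rewrite -homX //; apply: residually_finite_residual1 Nrf _.
exact: hom_finite_residual.
Qed.

Theorem mainTheorem11 (n m : nat) (F : group) (x : 'I_n -> F)
  (r : 'I_m -> F) (a : 'I_m -> nat) (G : group) (phi : F -> G)
  (N : group) (psi : G -> N) :
  free_on x ->
  (forall i, ~ proper_power (r i)) ->
  presents r a phi ->
  residually_finite N ->
  is_hom psi ->
  (forall i, has_order (psi (phi (r i))) (a i)) ->
  rdef n r phi = n%:R - \sum_(i < m) ((a i)%:R)^-1.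
Proof.
move=> _ _ Pphi Nrf psi_hom ord_r.
rewrite /rdef; congr (_ - _); apply: eq_bigr => i _.
rewrite (@coset_orderE _ _ _ (a i)) //.
apply: coset_order_finite_residual psi_hom Nrf (ord_r i) _.
have phi_hom : is_hom phi by case: Pphi.
rewrite -homX // (presents_relator1 i Pphi).
exact: finite_residual1.
Qed.
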